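(* Assume $F$ is $K$-smooth with $\ell\in\mathrm{int}(K)$ and strongly $K$-convex with $\mu\in\mathrm{int}(K)$. Let $\{x^k\}$ be generated by Algorithm 6 where, for each $k\ge1$, $e_k:=\frac{(JF(x^k)-JF(x^{k-1}))(x^k-x^{k-1})}{\|x^k-x^{k-1}\|^2}$ (and $e_0\in\mathrm{int}(K)$ arbitrary), assumed not to terminate. Then for every $k\ge1$: (i) $\mu\preceq_K e_k\preceq_K\ell$ (in particular $e_k\in\mathrm{int}(K)$); (ii) $t_k\ge\min_{c^*\in C_e}\gamma\langle c^*,e_k\rangle/\langle c^*,\ell\rangle$.
   Context: $K\subset\mathbb{R}^m$ closed convex pointed cone with nonempty interior; $y\preceq_K y'$ iff $y'-y\in K$. $K^*=\{c:\langle c,y\rangle\ge0\ \forall y\in K\}$; for $e\in\mathrm{int}(K)$, $C_e:=\{c^*\in K^*:\langle c^*,e\rangle=1\}$. $F:\mathbb{R}^n\to\mathbb{R}^m$ differentiable with Jacobian $JF$. Strongly $K$-convex with $\mu$: $JF(x)(y-x)+\tfrac12\|y-x\|^2\mu\preceq_K F(y)-F(x)$ $\forall x,y$; $K$-smooth with $\ell$: $F(y)-F(x)\preceq_K JF(x)(y-x)+\tfrac12\|y-x\|^2\ell$ $\forall x,y$. Algorithm 6: given $x^0$, $\gamma\in(0,1)$, for $k=0,1,\dots$: choose $e_k\in\mathrm{int}(K)$; $d^k:=\arg\min_d\max_{c^*\in C_e}\langle c^*,JF(x^k)d+\tfrac12\|d\|^2e_k\rangle$; if $d^k=0$ stop;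 otherwise $t_k:=\max\{\gamma^j:j\in\mathbb{N},\ F(x^k+\gamma^jd^k)-F(x^k)\preceq_K\gamma^j(JF(x^k)d^k+\tfrac12\|d^k\|^2e_k)\}$, $x^{k+1}:=x^k+t_kd^k$. *)

From HB Require Import structures.
From mathcomp Require Import all_boot all_order all_algebra.
From mathcomp Require Import all_classical all_reals all_analysis.
Set Implicit Arguments. Unset Strict Implicit. Unset Printing Implicit Defensive.
Import Order.TTheory GRing.Theory Num.Theory.
Import numFieldNormedType.Exports.
Local Open Scope classical_set_scope.
Local Open Scope ring_scope.

Section Defs.
Variable R : realType.

Definition dotv (p : nat) (u v : 'cV[R]_p) : R := \sum_(i < p) u i 0 * v i 0.

Definition sqnorm (p : nat) (u : 'cV[R]_p) : R := \sum_(i < p) u i 0 ^+ 2.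

Definition proper_cone (m : nat) (K : set 'cV[R]_m) : Prop :=
  [/\ closed K,
      (forall (a : R) y, 0 <= a -> K y -> K (a *: y)),
      (forall y y', K y -> K y' -> K (y + y')),
      (forall y, K y -> K (- y) -> y = 0)
    & exists y, (interior K) y].

Definition coneLe (m : nat) (K : set 'cV[R]_m) (y y' : 'cV[R]_m) : Prop :=
  K (y' - y).

Definition dual_cone (m : nat) (K : set 'cV[R]_m) : set 'cV[R]_m :=
  [set c | forall y, K y -> 0 <= dotv c y].

Definition Cset (m : nat) (K : set 'cV[R]_m) (e : 'cV[R]_m) : set 'cV[R]_m :=
  [set c | dual_cone K c /\ dotv c e = 1].

Definition strongly_K_convex (n m : nat) (K : set 'cV[R]_m)
  (F : 'cV[R]_n -> 'cV[R]_m) (JF : 'cV[R]_n -> 'M[R]_(m, n)) (mu : 'cV[R]_m) :=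
  forall x y, coneLe K (JF x *m (y - x) + (sqnorm (y - x) / 2) *: mu) (F y - F x).

Definition K_smooth (n m : nat) (K : set 'cV[R]_m)
  (F : 'cV[R]_n -> 'cV[R]_m) (JF : 'cV[R]_n -> 'M[R]_(m, n)) (l : 'cV[R]_m) :=
  forall x y, coneLe K (F y - F x) (JF x *m (y - x) + (sqnorm (y - x) / 2) *: l).

Definition dir_obj (n m : nat) (K : set 'cV[R]_m) (e : 'cV[R]_m)
  (A : 'M[R]_(m, n)) (ek : 'cV[R]_m) (d : 'cV[R]_n) : R :=
  sup [set dotv c (A *m d + (sqnorm d / 2) *: ek) | c in Cset K e].

Definition armijo (n m : nat) (K : set 'cV[R]_m)
  (F : 'cV[R]_n -> 'cV[R]_m) (JF : 'cV[R]_n -> 'M[R]_(m, n))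
  (x d : 'cV[R]_n) (ek : 'cV[R]_m) (s : R) : Prop :=
  coneLe K (F (x + s *: d) - F x) (s *: (JF x *m d + (sqnorm d / 2) *: ek)).

(* {x^k}, {d^k}, {t_k} are generated by Algorithm 6 with the choices {e_k},
   without termination *)
Definition algorithm6 (n m : nat) (K : set 'cV[R]_m) (e : 'cV[R]_m)
  (F : 'cV[R]_n -> 'cV[R]_m) (JF : 'cV[R]_n -> 'M[R]_(m, n)) (gamma : R)
  (x d : nat -> 'cV[R]_n) (t : nat -> R) (es : nat -> 'cV[R]_m) : Prop :=
  forall k : nat,
    [/\ (forall d', dir_obj K e (JF (x k)) (es k) (d k)
                    <= dir_obj K e (JF (x k)) (es k) d'),
        d k != 0,
        (exists j : nat,
            [/\ t k = gamma ^+ j,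
                armijo K F JF (x k) (d k) (es k) (gamma ^+ j)
              & forall j' : nat, armijo K F JF (x k) (d k) (es k) (gamma ^+ j') ->
                  gamma ^+ j' <= gamma ^+ j])
      & x k.+1 = x k + t k *: d k].

End Defs.

(* (i) Adding the strong K-convexity (resp. K-smoothness) inequalities at
   (x^{k-1}, x^k) and (x^k, x^{k-1}) gives
   ||v||^2 mu <=_K (JF x^k - JF x^{k-1}) v <=_K ||v||^2 l  for v = x^k - x^{k-1};
   dividing by ||v||^2 yields mu <=_K e_k <=_K l, and e_k = mu + (e_k - mu) is
   interior since mu is.
   (ii) By K-smoothness the Armijo test accepts every s with s l <=_K e_k.  If
   t_k = gamma^(j+1), the step gamma^j was rejected, so e_k - gamma^j l lies
   outside the closed cone K; separating it from K gives c in C_e with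
   <c, e_k> < gamma^j <c, l>.  If t_k = 1, every c in C_e works because
   <c, e_k> <= <c, l>. *)

From HB Require Import structures.
From mathcomp Require Import all_boot all_order all_algebra.
From mathcomp Require Import all_classical all_reals all_analysis.
From mathcomp Require Import ring lra.
Set Implicit Arguments. Unset Strict Implicit. Unset Printing Implicit Defensive.
Import Order.TTheory GRing.Theory Num.Theory.
Import numFieldNormedType.Exports.
Local Open Scope classical_set_scope.
Local Open Scope ring_scope.

Section InnerProduct.
Variables (R : realType) (p : nat).
Implicit Types (c u v : 'cV[R]_p) (r : R).

Lemma sqnorm_dotv u : sqnorm u = dotv u u.
Proof. by apply: eq_bigr => i _; rewrite expr2. Qed.

Lemma sqnorm_ge0 u : 0 <= sqnorm u.
Proof. by apply: sumr_ge0 => i _; rewrite sqr_ge0. Qed.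

Lemma sqnorm_gt0 u : u != 0 -> 0 < sqnorm u.
Proof.
move=> u_neq0; rewrite lt_neqAle sqnorm_ge0 andbT eq_sym.
apply: contra u_neq0 => /eqP u_sq0; apply/eqP/matrixP => i j; rewrite ord1 mxE.
have /eqP := @psumr_eq0P _ _ _ (fun k => u k 0 ^+ 2)
  (fun k _ => sqr_ge0 (u k 0)) u_sq0 i isT.
by rewrite sqrf_eq0 => /eqP.
Qed.

Lemma sqnormN u : sqnorm (- u) = sqnorm u.
Proof. by apply: eq_bigr => i _; rewrite mxE sqrrN. Qed.

Lemma sqnormZ r u : sqnorm (r *: u) = r ^+ 2 * sqnorm u.
Proof. by rewrite /sqnorm mulr_sumr; apply: eq_bigr => i _; rewrite mxE exprMn. Qed.

Lemma sqnormDZ u v r :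
  sqnorm (u + r *: v) = sqnorm u + 2 * r * dotv u v + r ^+ 2 * sqnorm v.
Proof.
rewrite /sqnorm /dotv !mulr_sumr -!big_split /=.
by apply: eq_bigr => i _; rewrite !mxE; ring.
Qed.

Lemma dotv0l u : dotv 0 u = 0.
Proof. by rewrite /dotv big1 // => i _; rewrite mxE mul0r. Qed.

Lemma dotvB c u v : dotv c (u - v) = dotv c u - dotv c v.
Proof. by rewrite /dotv -sumrB; apply: eq_bigr => i _; rewrite !mxE; ring. Qed.

Lemma dotvZr c u r : dotv c (r *: u) = r * dotv c u.
Proof. by rewrite /dotv mulr_sumr; apply: eq_bigr => i _; rewrite !mxE; ring. Qed.

Lemma dotvZl c u r : dotv (r *: c) u = r * dotv c u.
Proof. by rewrite /dotv mulr_sumr; apply: eq_bigr => i _; rewrite !mxE; ring. Qed.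

End InnerProduct.

Section NearestPoint.
Variables (R : realType) (m : nat).

Lemma trmx_continuous : continuous (fun w : 'rV[R]_m => w^T).
Proof.
move=> w A /= /nbhs_ballP [eps eps_gt0 epsA]; apply/nbhs_ballP.
by exists eps => // v [_ wv]; apply: epsA; split => // i j; rewrite !mxE; exact: wv.
Qed.

(* Minimise over row vectors, where [rV_compact] provides compactness of boxes. *)
Lemma closed_nearest_point (A : set 'cV[R]_m) (z : 'cV[R]_m) :
  closed A -> A !=set0 ->
  exists2 q, A q & forall y, A y -> sqnorm (q - z) <= sqnorm (y - z).
Proof.
move=> A_closed [y0 Ay0].
pose s0 := sqnorm (y0 - z).
pose g (w : 'rV[R]_m) := \sum_(i < m) (w ord0 i - z i 0) ^+ 2.
have gE w : g w = sqnorm (w^T - z) by apply: eq_bigr => i _; rewrite !mxE.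
have g_cont : continuous g.
  apply: continuous_big => [|i _]; first exact: add_continuous.
  move=> w; apply: (@continuous_comp _ _ _
    (fun w : 'rV[R]_m => w ord0 i - z i 0) (fun r => r ^+ 2)).
    exact: (cvgB (@coord_continuous _ 1 m ord0 i w) (cvg_cst _)).
  exact: exprn_continuous.
pose S := [set w : 'rV[R]_m | A w^T /\ g w <= s0].
have S_closed : closed S.
  apply: closedI.
    by apply: preimage_closed A_closed => w _; exact: trmx_continuous.
  by apply: preimage_closed (@closed_le R s0) => w _; exact: g_cont.
pose side i := `[z i 0 - (1 + s0), z i 0 + (1 + s0)]%classic.
pose box := [set w : 'rV[R]_m | forall i, side i (w ord0 i)].
have S_box : S `<=` box.
  move=> w [_ gw] i; have s0_ge0 : 0 <= s0 by exact: sqnorm_ge0.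
  have : (w ord0 i - z i 0) ^+ 2 <= s0.
    apply: le_trans gw; rewrite /g (bigD1 i) //= lerDl.
    by apply: sumr_ge0 => j _; exact: sqr_ge0.
  by rewrite /side /= in_itv /= => wi; apply/andP; split; nra.
have box_compact : compact box.
  by apply: (@rV_compact _ _ side) => i; exact: segment_compact.
have S_compact := subclosed_compact S_closed box_compact S_box.
have S_neq0 : S !=set0 by exists y0^T; split; rewrite /= ?gE trmxK.
have [w0 w0S w0_min] :=
  compact_EVT_min S_neq0 S_compact (continuous_subspaceT g_cont).
move: w0S; rewrite inE => -[Aw0 gw0].
exists w0^T => // y Ay; rewrite -gE.
have [ys0|/ltW s0y] := leP (sqnorm (y - z)) s0; last exact: le_trans gw0 s0y.
by rewrite -[y]trmxK -gE; apply: w0_min; rewrite inE; split; rewrite ?gE trmxK.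
Qed.

End NearestPoint.

Lemma quadratic_slope_ge0 (R : realFieldType) (a b : R) : 0 <= b ->
  (forall r, 0 < r -> r <= 1 -> 0 <= 2 * r * a + r ^+ 2 * b) -> 0 <= a.
Proof.
move=> b_ge0 quad_ge0; rewrite leNgt; apply/negP => a_lt0.
have ba_gt0 : 0 < b - a by lra.
pose r := - a / (b - a).
have r_gt0 : 0 < r by rewrite divr_gt0 // oppr_gt0.
have r_le1 : r <= 1 by rewrite ler_pdivrMr // mul1r; lra.
have rb_le : r * b <= - a by rewrite mulrAC ler_pdivrMr //; nra.
have := quad_ge0 r r_gt0 r_le1; rewrite expr2; nra.
Qed.

Section ConvexCone.
Variables (R : realType) (m : nat) (K : set 'cV[R]_m).
Hypothesis K_scale : forall (a : R) y, 0 <= a -> K y -> K (a *: y).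
Hypothesis K_add : forall y y', K y -> K y' -> K (y + y').

(* The nearest point q of K to z separates: c := q - z is in the dual cone
   by first-order optimality along q + r y, and <c, q> <= 0 along (1 - r) q. *)
Lemma cone_separation (z : 'cV[R]_m) : closed K -> K !=set0 -> ~ K z ->
  exists2 c, dual_cone K c & dotv c z < 0.
Proof.
move=> K_closed K_neq0 Kz_false.
have [q Kq q_min] := closed_nearest_point z K_closed K_neq0.
pose c := q - z.
have c_min y : K (q + y) -> sqnorm c <= sqnorm (c + y).
  by move=> /q_min; rewrite addrAC.
have c_dual : dual_cone K c.
  move=> y Ky; apply: (quadratic_slope_ge0 (sqnorm_ge0 y)) => r r_gt0 _.
  have := c_min _ (K_add Kq (K_scale (ltW r_gt0) Ky)); rewrite sqnormDZ; lra.
have cq_le0 : dotv c q <= 0.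
  rewrite -oppr_ge0; apply: (quadratic_slope_ge0 (sqnorm_ge0 q)) => r _ r_le1.
  have : K (q + (- r) *: q).
    by rewrite scaleNr -{1}(scale1r q) -scalerBl; apply: K_scale => //; lra.
  by move=> /c_min; rewrite sqnormDZ sqrrN; lra.
exists c => //.
have c_neq0 : c != 0.
  by apply/eqP => /eqP; rewrite subr_eq0 => /eqP qz; apply: Kz_false; rewrite -qz.
have := sqnorm_gt0 c_neq0; rewrite sqnorm_dotv.
have -> : z = q - c by rewrite opprB addrC subrK.
by rewrite dotvB; lra.
Qed.

Lemma interior_addr a b : interior K a -> K b -> interior K (a + b).
Proof.
move=> /nbhs_ballP [eps eps_gt0 epsK] Kb; apply/nbhs_ballP.
exists eps => // v [_ av]; rewrite -(subrK b v); apply: K_add (epsK _ _) Kb.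
split => // i j; move: (av i j); rewrite -!ball_normE /= !mxE.
by rewrite opprB addrA.
Qed.

Lemma coneLe_trans u v w : coneLe K u v -> coneLe K v w -> coneLe K u w.
Proof. by rewrite /coneLe => Kuv /K_add /(_ Kuv); rewrite addrA subrK. Qed.

Lemma coneLeZ (a : R) u v : 0 <= a -> coneLe K u v -> coneLe K (a *: u) (a *: v).
Proof. by rewrite /coneLe -scalerBr; exact: K_scale. Qed.

Lemma dotv_interior_gt0 e c : interior K e -> dual_cone K c -> c != 0 ->
  0 < dotv c e.
Proof.
move=> /nbhs_ballP [eps eps_gt0 epsK] c_dual c_neq0.
have c_gt0 : 0 < `|c| by rewrite normr_gt0.
pose r := eps / (2 * `|c|).
have r_gt0 : 0 < r by rewrite divr_gt0 // mulr_gt0.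
have : K (e - r *: c).
  apply: epsK; rewrite -ball_normE /= opprB addrCA subrr addr0 normrZ gtr0_norm //.
  have -> : r * `|c| = eps / 2 by rewrite /r; field; rewrite gt_eqF.
  by rewrite ltr_pdivrMr // mulr_natr mulr2n ltrDr.
move=> /c_dual; rewrite dotvB dotvZr -sqnorm_dotv.
by have := mulr_gt0 r_gt0 (sqnorm_gt0 c_neq0); lra.
Qed.

Lemma Cset_neq0 e c : Cset K e c -> c != 0.
Proof.
move=> [_ ce1]; apply/eqP => c0; move: ce1.
by rewrite c0 dotv0l => /eqP; rewrite eq_sym oner_eq0.
Qed.

Lemma dual_cone_normalize e c : interior K e -> dual_cone K c -> c != 0 ->
  Cset K e ((dotv c e)^-1 *: c).
Proof.
move=> e_int c_dual c_neq0; have ce_gt0 := dotv_interior_gt0 e_int c_dual c_neq0.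
split; last by rewrite dotvZl mulVf ?gt_eqF.
by move=> y Ky; rewrite dotvZl mulr_ge0 ?c_dual // invr_ge0 ltW.
Qed.

End ConvexCone.

Section JacobianBounds.
Variables (R : realType) (n m : nat) (K : set 'cV[R]_m).
Variables (F : 'cV[R]_n -> 'cV[R]_m) (JF : 'cV[R]_n -> 'M[R]_(m, n)).
Hypothesis K_scale : forall (a : R) y, 0 <= a -> K y -> K (a *: y).
Hypothesis K_add : forall y y', K y -> K y' -> K (y + y').

Definition secant_vector (x y : 'cV[R]_n) : 'cV[R]_m :=
  (sqnorm (y - x))^-1 *: ((JF y - JF x) *m (y - x)).

Lemma strongly_K_convex_monotone mu x y : strongly_K_convex K F JF mu ->
  coneLe K (sqnorm (y - x) *: mu) ((JF y - JF x) *m (y - x)).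
Proof.
move=> Fcvx; apply: (eq_ind _ K (K_add (Fcvx x y) (Fcvx y x))).
rewrite -[x - y]opprB sqnormN mulmxN mulmxBl.
by apply/matrixP => i j; rewrite !mxE; field.
Qed.

Lemma K_smooth_monotone l x y : K_smooth K F JF l ->
  coneLe K ((JF y - JF x) *m (y - x)) (sqnorm (y - x) *: l).
Proof.
move=> Fsmooth; apply: (eq_ind _ K (K_add (Fsmooth x y) (Fsmooth y x))).
rewrite -[x - y]opprB sqnormN mulmxN mulmxBl.
by apply/matrixP => i j; rewrite !mxE; field.
Qed.

Lemma secant_vector_ge mu x y : strongly_K_convex K F JF mu -> x != y ->
  coneLe K mu (secant_vector x y).
Proof.
move=> Fcvx xy.
have s_gt0 : 0 < sqnorm (y - x) by rewrite sqnorm_gt0 // subr_eq0 eq_sym.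
have s_inv_ge0 : 0 <= (sqnorm (y - x))^-1 by rewrite invr_ge0 ltW.
have := coneLeZ K_scale s_inv_ge0 (strongly_K_convex_monotone x y Fcvx).
by rewrite scalerA mulVf ?gt_eqF // scale1r.
Qed.

Lemma secant_vector_le l x y : K_smooth K F JF l -> x != y ->
  coneLe K (secant_vector x y) l.
Proof.
move=> Fsmooth xy.
have s_gt0 : 0 < sqnorm (y - x) by rewrite sqnorm_gt0 // subr_eq0 eq_sym.
have s_inv_ge0 : 0 <= (sqnorm (y - x))^-1 by rewrite invr_ge0 ltW.
have := coneLeZ K_scale s_inv_ge0 (K_smooth_monotone x y Fsmooth).
by rewrite scalerA mulVf ?gt_eqF // scale1r.
Qed.

Lemma armijo_of_K_smooth l x d ek s : K_smooth K F JF l -> 0 <= s ->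
  coneLe K (s *: l) ek -> armijo K F JF x d ek s.
Proof.
move=> Fsmooth s_ge0 sl_ek; have := Fsmooth x (x + s *: d).
rewrite addrAC subrr add0r sqnormZ -scalemxAr => Fstep.
apply: (coneLe_trans K_add Fstep); rewrite /coneLe.
have w_ge0 : 0 <= s * sqnorm d / 2 by rewrite divr_ge0 // mulr_ge0 // sqnorm_ge0.
apply: (eq_ind _ K (K_scale w_ge0 sl_ek)).
by apply/matrixP => i j; rewrite !mxE; field.
Qed.

End JacobianBounds.

Section BacktrackingStep.
Variables (R : realType) (n m : nat) (K : set 'cV[R]_m).
Variables (F : 'cV[R]_n -> 'cV[R]_m) (JF : 'cV[R]_n -> 'M[R]_(m, n)).
Variables (l e ek : 'cV[R]_m) (gamma : R) (x d : 'cV[R]_n).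
Hypothesis K_closed : closed K.
Hypothesis K_scale : forall (a : R) y, 0 <= a -> K y -> K (a *: y).
Hypothesis K_add : forall y y', K y -> K y' -> K (y + y').
Hypothesis l_int : interior K l.
Hypothesis e_int : interior K e.
Hypothesis Fsmooth : K_smooth K F JF l.
Hypotheses (gamma_gt0 : 0 < gamma) (gamma_lt1 : gamma < 1).
Hypotheses (ek_K : K ek) (ek_le_l : coneLe K ek l).

Lemma Cset_ratio_ge0 c : Cset K e c -> 0 <= dotv c ek / dotv c l.
Proof.
by move=> [c_dual _]; apply: divr_ge0; apply: c_dual => //; exact: interior_subset.
Qed.

Lemma Cset_ratio_le1 c : Cset K e c -> dotv c ek / dotv c l <= 1.
Proof.
move=> Cc; have [c_dual _] := Cc.
have cl_gt0 := dotv_interior_gt0 l_int c_dual (Cset_neq0 Cc).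
by rewrite ler_pdivrMr // mul1r -subr_ge0 -dotvB; exact: c_dual.
Qed.

Lemma armijo_failure_separation s : 0 <= s -> ~ armijo K F JF x d ek s ->
  exists2 c, Cset K e c & dotv c ek < s * dotv c l.
Proof.
move=> s_ge0 no_armijo.
have : ~ K (ek - s *: l).
  by move=> /(armijo_of_K_smooth K_scale K_add x d Fsmooth s_ge0).
have K_neq0 : K !=set0 by exists l; exact: interior_subset.
move=> /(cone_separation K_scale K_add K_closed K_neq0) [c c_dual c_neg].
have c_neq0 : c != 0 by apply: contraTneq c_neg => ->; rewrite dotv0l ltxx.
exists ((dotv c e)^-1 *: c); first exact: dual_cone_normalize.
have ce_gt0 := dotv_interior_gt0 e_int c_dual c_neq0.
rewrite !dotvZl mulrCA ltr_pM2l ?invr_gt0 //.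
by move: c_neg; rewrite dotvB dotvZr; lra.
Qed.

Lemma backtracking_step_ge j :
  (forall j', armijo K F JF x d ek (gamma ^+ j') -> gamma ^+ j' <= gamma ^+ j) ->
  inf [set gamma * dotv c ek / dotv c l | c in Cset K e] <= gamma ^+ j.
Proof.
move=> j_max; set S := [set _ | _ in _].
have S_lb : has_lbound S.
  by exists 0; move=> _ [c Cc <-]; rewrite -mulrA mulr_ge0 ?Cset_ratio_ge0 // ltW.
case: j j_max => [|j] j_max.
  have [[c Cc]|no_C] := pselect (Cset K e !=set0); last first.
    rewrite (_ : S = set0) ?inf0 ?expr0 //.
    by rewrite -subset0 => y [c Cc _]; apply: no_C; exists c.
  apply: le_trans (ge_inf S_lb (imageP _ Cc)) _.
  rewrite expr0 -mulrA; apply: mulr_ile1; first exact: ltW.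
  - exact: Cset_ratio_ge0.
  - exact: ltW.
  - exact: Cset_ratio_le1.
have gj_gt0 : 0 < gamma ^+ j by rewrite exprn_gt0.
have no_armijo : ~ armijo K F JF x d ek (gamma ^+ j).
  by move=> /j_max; rewrite exprS ler_pMl // leNgt gamma_lt1.
have [c Cc c_lt] := armijo_failure_separation (ltW gj_gt0) no_armijo.
apply: le_trans (ge_inf S_lb (imageP _ Cc)) _.
have cl_gt0 := dotv_interior_gt0 l_int Cc.1 (Cset_neq0 Cc).
rewrite exprS -mulrA; apply: ler_wpM2l; first exact: ltW.
by rewrite ler_pdivrMr // ltW.
Qed.

End BacktrackingStep.

Theorem mainTheorem15 (R : realType) (n m : nat) (K : set 'cV[R]_m)
  (F : 'cV[R]_n -> 'cV[R]_m) (JF : 'cV[R]_n -> 'M[R]_(m, n))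
  (mu l e : 'cV[R]_m) (gamma : R)
  (x d : nat -> 'cV[R]_n) (t : nat -> R) (es : nat -> 'cV[R]_m) :
  proper_cone K ->
  (forall z, differentiable F z /\ forall v, 'd F z v = JF z *m v) ->
  (interior K) l -> K_smooth K F JF l ->
  (interior K) mu -> strongly_K_convex K F JF mu ->
  (interior K) e ->
  0 < gamma < 1 ->
  (interior K) (es 0%N) ->
  (forall k : nat, (1 <= k)%N ->
     es k = (sqnorm (x k - x k.-1))^-1 *: ((JF (x k) - JF (x k.-1)) *m (x k - x k.-1))) ->
  algorithm6 K e F JF gamma x d t es ->
  forall k : nat, (1 <= k)%N ->
    [/\ coneLe K mu (es k), coneLe K (es k) l, (interior K) (es k)
      & inf [set gamma * dotv c (es k) / dotv c l | c in Cset K e] <= t k].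
Proof.
move=> [K_closed K_scale K_add _ _] _ l_int Fsmooth mu_int Fcvx e_int
  /andP[gamma_gt0 gamma_lt1] _ es_secant alg [//|k] _.
have es_def : es k.+1 = secant_vector JF (x k) (x k.+1) := es_secant k.+1 isT.
have x_moves : x k != x k.+1.
  have [_ dk_neq0 [j [tk _ _]] xk1] := alg k.
  rewrite eq_sym -subr_eq0 xk1 addrAC subrr add0r scaler_eq0 negb_or dk_neq0 tk.
  by rewrite expf_neq0 // gt_eqF.
have es_ge_mu := secant_vector_ge K_scale K_add Fcvx x_moves.
have es_le_l := secant_vector_le K_scale K_add Fsmooth x_moves.
rewrite -es_def in es_ge_mu es_le_l.
have es_int : interior K (es k.+1).
  by rewrite -(subrK mu (es k.+1)) addrC; exact: interior_addr.
split => //.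
have [_ _ [j [tk1 _ j_max]] _] := alg k.+1.
rewrite tk1; apply: (backtracking_step_ge K_closed K_scale K_add l_int e_int Fsmooth
  gamma_gt0 gamma_lt1 (interior_subset es_int) es_le_l j_max).
Qed.
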